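(* Let $\omega\colon\mathbf Z_+\to(0,+\infty)$ be a weight which is bounded from below and such that $\mathcal T$ is a bounded operator on $\mathcal X_\omega$. Then the adjoint $\mathcal T^*$ of $\mathcal T$ on $\mathcal X_\omega$ has no eigenvalues: $\sigma_p(\mathcal T^* )=\emptyset$. In particular this holds for $\omega=\omega_0$, $\omega_0(n)=(n+1)/\pi$.
   Context: $T\colon\mathbf Z_+\to\mathbf Z_+$ is the modified Collatz map: $T(n)=n/2$ for $n$ even, $T(n)=(3n+1)/2$ for $n$ odd. $\mathcal X_\omega$ is the Hilbert space of holomorphic functions $f(z)=\sum_{n\ge3}c_nz^n$ on the unit disk with $\|f\|_\omega^2=\sum_{n\ge3}|c_n|^2/\omega(n)<\infty$ and inner product $\langle f,g\rangle=\sum_{n\ge3}c_n(f)\overline{c_n(g)}/\omega(n)$. $\mathcal T\sum_{n\ge3}c_nz^n=\sum_{j\ge3,\,T(j)\ge3}c_jz^{T(j)}$. $\mathcal T$ is bounded on $\mathcal X_\omega$ iff the sequences $\omega(6m)/\omega(3m)$, $\omega(6m+2)/\omega(3m+1)$, $(\omega(6m+4)+\omega(2m+1))/\omega(3m+2)$ ($m\ge1$) are bounded; this holds for $\omega_0$. $\sigma_p$ denotes the point spectrum (set of eigenvalues). *)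

From Stdlib Require Import Reals Arith List.
From Coquelicot Require Import Coquelicot.
Import ListNotations.
Open Scope R_scope.

Definition collatzT (n : nat) : nat :=
  if Nat.even n then Nat.div n 2 else Nat.div (3 * n + 1) 2.

(* Coefficient sequences c : nat -> C represent f(z) = sum_{n>=3} c_n z^n.
   Membership in X_omega: c_n = 0 for n < 3, f holomorphic on the unit disk
   (the power series converges absolutely on |z| = r for every r < 1),
   and sum |c_n|^2 / omega(n) < oo. *)
Definition inX (omega : nat -> R) (c : nat -> C) : Prop :=
  (forall n : nat, (n < 3)%nat -> c n = 0%C) /\
  (forall r : R, 0 <= r < 1 -> ex_series (fun n => Cmod (c n) * r ^ n)) /\
  ex_series (fun n => (Cmod (c n)) ^ 2 / omega n).

Definition normsqX (omega : nat -> R) (c : nat -> C) : R :=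
  Series (fun n => (Cmod (c n)) ^ 2 / omega n).
Definition normX (omega : nat -> R) (c : nat -> C) : R := sqrt (normsqX omega c).

Definition ipX (omega : nat -> R) (c d : nat -> C) : C :=
  let t := fun n => (c n * Cconj (d n) / RtoC (omega n))%C in
  (Series (fun n => fst (t n)), Series (fun n => snd (t n))).

(* The operator T: (T c)_k = sum over j >= 3 with T(j) = k of c_j, for k >= 3.
   Since T(j) >= j/2, such j satisfy j <= 2k, so the range 3..2k suffices. *)
Definition Top (c : nat -> C) (k : nat) : C :=
  if Nat.ltb k 3 then 0%C
  else fold_right Cplus 0%C
         (map c (filter (fun j => Nat.eqb (collatzT j) k) (seq 3 (2 * k - 2)))).

Definition Tbounded (omega : nat -> R) : Prop :=
  (forall c, inX omega c -> inX omega (Top c)) /\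
  exists M : R, forall c, inX omega c -> normX omega (Top c) <= M * normX omega c.

(* lambda is an eigenvalue of the adjoint T^*: there is g in X_omega, g <> 0,
   with T^* g = lambda g, i.e. <T f, g> = <f, lambda g> for all f in X_omega. *)
Definition adj_eigenvalue (omega : nat -> R) (lambda : C) : Prop :=
  exists g : nat -> C, inX omega g /\ (exists n, g n <> 0%C) /\
    forall f, inX omega f -> ipX omega (Top f) g = (Cconj lambda * ipX omega f g)%C.

Definition omega0 (n : nat) : R := (INR n + 1) / PI.

From Stdlib Require Import Reals Lia Lra List.
From Coquelicot Require Import Coquelicot.
Open Scope R_scope.

(* Testing T^* g = lambda g against the unit vectors e_j (j >= 3) shows that
   a_n = |g_n| / omega(n) satisfies |lambda| a_j = a_(T j) if T j >= 3, and
   |lambda| a_j = 0 otherwise.  As omega is bounded below and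
   sum |g_n|^2 / omega(n) < oo, a_n -> 0.  If |lambda| <= 1, the case j = 2n gives
   a_n <= a_(2n) <= a_(4n) <= ..., so a_n = 0; if |lambda| > 1, iterating along the
   T-orbit gives |lambda|^k a_j <= sup a for all k, so again a_j = 0. *)

Lemma is_series_single (u : nat -> R) (j : nat) :
  (forall n, n <> j -> u n = 0) -> is_series u (u j).
Proof.
  intros Hu.
  assert (Hsum : forall n, (j <= n)%nat -> sum_n u n = u j).
  { intros n Hn; induction Hn as [|n Hn IH].
    - destruct j as [|j]; [now rewrite sum_O|].
      rewrite sum_Sn, (sum_n_ext_loc u (fun _ => 0)), sum_n_const.
      + unfold plus; simpl; ring.
      + intros m Hm; apply Hu; lia.
    - rewrite sum_Sn, IH, (Hu (S n)) by lia; unfold plus; simpl; ring. }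
  enough (H : is_lim_seq (sum_n u) (u j)) by exact H.
  apply (is_lim_seq_ext_loc (fun _ => u j)).
  - exists j; intros n Hn; now rewrite Hsum.
  - apply is_lim_seq_const.
Qed.

Lemma ex_series_single (u : nat -> R) (j : nat) :
  (forall n, n <> j -> u n = 0) -> ex_series u.
Proof. intros Hu; exists (u j); exact (is_series_single u j Hu). Qed.

Lemma Series_single (u : nat -> R) (j : nat) :
  (forall n, n <> j -> u n = 0) -> Series u = u j.
Proof. intros Hu; exact (is_series_unique u _ (is_series_single u j Hu)). Qed.

Lemma is_lim_seq_sqrt_0 (u : nat -> R) :
  is_lim_seq u 0 -> is_lim_seq (fun n => sqrt (u n)) 0.
Proof.
  intros Hu; rewrite <- sqrt_0.
  exact (filterlim_comp _ _ _ u sqrt _ _ _ Hu (continuous_sqrt 0)).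
Qed.

Lemma pow_mul_bounded_nonpos (L x B : R) :
  1 < L -> (forall k, L ^ k * x <= B) -> x <= 0.
Proof.
  intros HL Hk; apply Rnot_lt_le; intros Hx.
  assert (Hlim : is_lim_seq (fun k => L ^ k * x) p_infty).
  { replace p_infty with (Rbar_mult p_infty x).
    - exact (is_lim_seq_scal_r _ x _ (is_lim_seq_geom_p L HL)).
    - simpl; destruct Rle_dec as [H|H]; [|lra].
      destruct Rle_lt_or_eq_dec; [reflexivity|lra]. }
  exact (is_lim_seq_le _ _ _ _ Hk Hlim (is_lim_seq_const B)).
Qed.

Lemma is_lim_seq_bounded (u : nat -> R) (l : R) :
  is_lim_seq u l -> exists B, forall n, u n <= B.
Proof.
  intros Hu; destruct (filterlim_bounded u (ex_intro _ (l : R) Hu)) as [B HB].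
  exists B; intros n; exact (Rle_trans _ _ _ (Rle_abs _) (HB n)).
Qed.

Lemma le_double_lim_0_nonpos (u : nat -> R) (m : nat) :
  (0 < m)%nat -> (forall n, (m <= n)%nat -> u n <= u (2 * n)%nat) ->
  is_lim_seq u 0 -> forall n, (m <= n)%nat -> u n <= 0.
Proof.
  intros Hm Hu Hlim n Hn.
  assert (Hchain : forall k, u n <= u (2 ^ k * n)%nat).
  { induction k as [|k IH]; [simpl; rewrite Nat.add_0_r; lra|].
    apply (Rle_trans _ _ _ IH).
    replace (2 ^ S k * n)%nat with (2 * (2 ^ k * n))%nat by (simpl; lia).
    apply Hu; pose proof (Nat.pow_lower_bound 2 k); nia. }
  assert (Hsub : filterlim (fun k => (2 ^ k * n)%nat) eventually eventually).
  { intros P [N HN]; exists N; intros k Hk; apply HN.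
    pose proof (Nat.pow_gt_lin_r 2 k); nia. }
  exact (is_lim_seq_le _ _ _ _ Hchain (is_lim_seq_const _)
           (is_lim_seq_subseq u 0 _ Hsub Hlim)).
Qed.

Lemma ratio_lim_0 (x w : nat -> R) (delta : R) :
  0 < delta -> (forall n, 0 <= x n) -> eventually (fun n => delta <= w n) ->
  ex_series (fun n => x n ^ 2 / w n) -> is_lim_seq (fun n => x n / w n) 0.
Proof.
  intros Hd Hx [N HN] Hs.
  apply (is_lim_seq_le_le_loc (fun _ => 0) _ (fun n => sqrt (x n ^ 2 / w n * / delta))).
  - exists N; intros n Hn; specialize (HN n Hn).
    assert (Hw : 0 < w n) by lra.
    assert (Hq : 0 <= x n / w n) by (apply Rdiv_le_0_compat; auto).
    split; [exact Hq|].
    rewrite <- (sqrt_pow2 _ Hq); apply sqrt_le_1_alt.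
    replace ((x n / w n) ^ 2) with (x n ^ 2 / w n * / w n) by (field; lra).
    apply Rmult_le_compat_l.
    + apply Rdiv_le_0_compat; [apply pow2_ge_0|exact Hw].
    + apply Rinv_le_contravar; assumption.
  - apply is_lim_seq_const.
  - apply is_lim_seq_sqrt_0.
    replace (Finite 0) with (Rbar_mult 0 (/ delta)) by (simpl; f_equal; ring).
    apply is_lim_seq_scal_r, ex_series_lim_0, Hs.
Qed.

Lemma collatzT_double (n : nat) : collatzT (2 * n) = n.
Proof.
  unfold collatzT; rewrite Nat.even_mul; cbn [Nat.even orb].
  rewrite Nat.mul_comm; apply Nat.div_mul; lia.
Qed.

Lemma le_double_collatzT (j : nat) : (j <= 2 * collatzT j)%nat.
Proof.
  unfold collatzT; destruct (Nat.even j) eqn:Ej.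
  - apply Nat.even_spec in Ej as [m ->]; rewrite Nat.mul_comm, Nat.div_mul; lia.
  - pose proof (Nat.div_mod (3 * j + 1) 2); pose proof (Nat.mod_upper_bound (3 * j + 1) 2).
    lia.
Qed.

Definition unit_seq (j : nat) : nat -> C := fun n => if Nat.eqb n j then 1%C else 0%C.

Lemma unit_seq_same (j : nat) : unit_seq j j = 1%C.
Proof. unfold unit_seq; now rewrite Nat.eqb_refl. Qed.

Lemma unit_seq_other (j n : nat) : n <> j -> unit_seq j n = 0%C.
Proof. intros Hn; unfold unit_seq; now destruct (Nat.eqb_spec n j). Qed.

Lemma sum_unit_seq (j : nat) (l : list nat) :
  fold_right Cplus 0%C (map (unit_seq j) l) = RtoC (INR (count_occ Nat.eq_dec l j)).
Proof.
  induction l as [|i l IH]; [reflexivity|]; simpl; rewrite IH.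
  destruct (Nat.eq_dec i j) as [->|Hij].
  - rewrite unit_seq_same, S_INR, RtoC_plus, Cplus_comm; reflexivity.
  - rewrite unit_seq_other by exact Hij; apply Cplus_0_l.
Qed.

Lemma Top_unit_seq (j k : nat) : (3 <= j)%nat ->
  Top (unit_seq j) k = if Nat.leb 3 (collatzT j) then unit_seq (collatzT j) k else 0%C.
Proof.
  intros Hj; unfold Top; rewrite sum_unit_seq.
  destruct (Nat.ltb_spec k 3) as [Hk|Hk].
  - destruct (Nat.leb_spec 3 (collatzT j)); [|reflexivity].
    symmetry; apply unit_seq_other; lia.
  - destruct (Nat.eqb_spec k (collatzT j)) as [->|Hkj].
    + assert (Hin : In j (filter (fun i => Nat.eqb (collatzT i) (collatzT j))
                                 (seq 3 (2 * collatzT j - 2)))).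
      { apply filter_In; split; [|apply Nat.eqb_refl].
        apply in_seq; pose proof (le_double_collatzT j); lia. }
      rewrite (proj1 (NoDup_count_occ' _ _) (NoDup_filter _ (seq_NoDup _ _)) j Hin).
      replace (Nat.leb 3 (collatzT j)) with true by (symmetry; apply Nat.leb_le; lia).
      now rewrite unit_seq_same.
    + rewrite (proj1 (count_occ_not_In _ _ _)).
      * destruct (Nat.leb 3 (collatzT j)); [|reflexivity].
        now rewrite unit_seq_other.
      * rewrite filter_In; intros [_ H]; apply Nat.eqb_eq in H; auto.
Qed.

Lemma unit_seq_inX (omega : nat -> R) (j : nat) : (3 <= j)%nat -> inX omega (unit_seq j).
Proof.
  intros Hj; repeat split.
  - intros n Hn; apply unit_seq_other; lia.
  - intros r _; apply (ex_series_single _ j).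
    intros n Hn; rewrite unit_seq_other, Cmod_0 by exact Hn; ring.
  - apply (ex_series_single _ j).
    intros n Hn; rewrite unit_seq_other, Cmod_0 by exact Hn; unfold Rdiv; ring.
Qed.

Lemma Cmod_ipX_single (omega : nat -> R) (c g : nat -> C) (m : nat) :
  0 < omega m -> (forall n, n <> m -> c n = 0%C) ->
  Cmod (ipX omega c g) = Cmod (c m) * Cmod (g m) / omega m.
Proof.
  intros Hw Hc.
  assert (Hterm : forall n, n <> m -> (c n * Cconj (g n) / RtoC (omega n))%C = 0%C).
  { intros n Hn; rewrite Hc by exact Hn; unfold Cdiv; now rewrite !Cmult_0_l. }
  unfold ipX.
  rewrite (Series_single _ m), (Series_single (fun n => snd _) m).
  - rewrite <- surjective_pairing, Cmod_div, Cmod_mult, Cmod_conj, Cmod_R, Rabs_pos_eq;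
      [reflexivity|lra|intros H; apply RtoC_inj in H; lra].
  - intros n Hn; cbv beta; now rewrite Hterm.
  - intros n Hn; cbv beta; now rewrite Hterm.
Qed.

Definition weighted_mod (omega : nat -> R) (g : nat -> C) (n : nat) : R :=
  Cmod (g n) / omega n.

Section AdjointEigenvector.

Variables (omega : nat -> R) (lambda : C) (g : nat -> C).
Hypothesis omega_pos : forall n, (1 <= n)%nat -> 0 < omega n.
Hypothesis g_eigen :
  forall f, inX omega f -> ipX omega (Top f) g = (Cconj lambda * ipX omega f g)%C.

Local Notation a := (weighted_mod omega g).

Lemma weighted_mod_nonneg (n : nat) : (1 <= n)%nat -> 0 <= a n.
Proof.
  intros Hn; apply Rdiv_le_0_compat; [apply Cmod_ge_0|exact (omega_pos n Hn)].
Qed.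

Lemma weighted_mod_collatzT (j : nat) : (3 <= j)%nat ->
  Cmod lambda * a j = if Nat.leb 3 (collatzT j) then a (collatzT j) else 0.
Proof.
  intros Hj.
  pose proof (le_double_collatzT j) as HTj.
  assert (Hrhs : Cmod (ipX omega (unit_seq j) g) = a j).
  { rewrite (Cmod_ipX_single _ _ _ j), unit_seq_same, Cmod_1.
    - now rewrite Rmult_1_l.
    - apply omega_pos; lia.
    - intros n Hn; now apply unit_seq_other. }
  assert (Hlhs : Cmod (ipX omega (Top (unit_seq j)) g)
                 = if Nat.leb 3 (collatzT j) then a (collatzT j) else 0).
  { rewrite (Cmod_ipX_single _ _ _ (collatzT j)).
    - rewrite Top_unit_seq by exact Hj; destruct (Nat.leb 3 (collatzT j)).
      + now rewrite unit_seq_same, Cmod_1, Rmult_1_l.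
      + now rewrite Cmod_0, Rmult_0_l, Rdiv_0_l.
    - apply omega_pos; lia.
    - intros n Hn; rewrite Top_unit_seq by exact Hj.
      destruct (Nat.leb 3 (collatzT j)); [now apply unit_seq_other|reflexivity]. }
  rewrite <- Hrhs, <- Hlhs, g_eigen, Cmod_mult, Cmod_conj by exact (unit_seq_inX omega j Hj).
  reflexivity.
Qed.

Lemma weighted_mod_double (n : nat) : (3 <= n)%nat -> a n = Cmod lambda * a (2 * n)%nat.
Proof.
  intros Hn; rewrite weighted_mod_collatzT, collatzT_double by lia.
  now replace (Nat.leb 3 n) with true by (symmetry; apply Nat.leb_le, Hn).
Qed.

Lemma pow_mul_weighted_mod_le (B : R) : 0 <= B -> (forall n, a n <= B) ->
  forall k j, (3 <= j)%nat -> Cmod lambda ^ k * a j <= B.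
Proof.
  intros HB Ha k; induction k as [|k IH]; intros j Hj.
  - rewrite pow_O, Rmult_1_l; apply Ha.
  - replace (Cmod lambda ^ S k * a j) with (Cmod lambda ^ k * (Cmod lambda * a j))
      by (simpl; ring).
    rewrite weighted_mod_collatzT by exact Hj.
    destruct (Nat.leb_spec 3 (collatzT j)) as [HTj|_].
    + exact (IH _ HTj).
    + now rewrite Rmult_0_r.
Qed.

Variable delta : R.
Hypothesis delta_pos : 0 < delta.
Hypothesis omega_ge : forall n, (1 <= n)%nat -> delta <= omega n.
Hypothesis g_inX : inX omega g.

Lemma weighted_mod_lim_0 : is_lim_seq a 0.
Proof.
  apply (ratio_lim_0 (fun n => Cmod (g n)) omega delta delta_pos).
  - intros n; apply Cmod_ge_0.
  - exists 1%nat; exact omega_ge.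
  - exact (proj2 (proj2 g_inX)).
Qed.

Lemma weighted_mod_nonpos (n : nat) : (3 <= n)%nat -> a n <= 0.
Proof.
  intros Hn; destruct (Rle_or_lt (Cmod lambda) 1) as [HL|HL].
  - apply (le_double_lim_0_nonpos a 3); [lia| |exact weighted_mod_lim_0|exact Hn].
    intros m Hm; rewrite (weighted_mod_double m Hm).
    pose proof (weighted_mod_nonneg (2 * m) ltac:(lia)); pose proof (Cmod_ge_0 lambda).
    nra.
  - destruct (is_lim_seq_bounded a 0 weighted_mod_lim_0) as [B HB].
    assert (HB0 : 0 <= B)
      by exact (Rle_trans _ _ _ (weighted_mod_nonneg 1 (le_n 1)) (HB 1%nat)).
    apply (pow_mul_bounded_nonpos _ _ B HL); intros k.
    exact (pow_mul_weighted_mod_le B HB0 HB k n Hn).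
Qed.

Lemma adj_eigenvector_eq_0 (n : nat) : g n = 0%C.
Proof.
  destruct (Nat.lt_ge_cases n 3) as [Hn|Hn]; [exact (proj1 g_inX n Hn)|].
  apply Cmod_eq_0, Rle_antisym; [|apply Cmod_ge_0].
  pose proof (weighted_mod_nonpos n Hn) as Ha; unfold weighted_mod, Rdiv in Ha.
  pose proof (omega_pos n ltac:(lia)) as Hw.
  apply Rmult_le_reg_r with (/ omega n); [now apply Rinv_0_lt_compat|lra].
Qed.

End AdjointEigenvector.

Lemma no_adj_eigenvalue (omega : nat -> R) :
  (forall n, (1 <= n)%nat -> 0 < omega n) ->
  (exists delta, 0 < delta /\ forall n, (1 <= n)%nat -> delta <= omega n) ->
  forall lambda, ~ adj_eigenvalue omega lambda.
Proof.
  intros Hpos [delta [Hdelta Hge]] lambda [g [Hg [[n Hn] Heig]]].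
  exact (Hn (adj_eigenvector_eq_0 omega lambda g Hpos Heig delta Hdelta Hge Hg n)).
Qed.

Lemma omega0_ge (n : nat) : / PI <= omega0 n.
Proof.
  unfold omega0, Rdiv; rewrite <- (Rmult_1_l (/ PI)) at 1.
  apply Rmult_le_compat_r; [left; apply Rinv_0_lt_compat, PI_RGT_0|].
  pose proof (pos_INR n); lra.
Qed.

Theorem theorem2p7 :
  (forall omega : nat -> R,
     (forall n : nat, (1 <= n)%nat -> 0 < omega n) ->
     (exists delta : R, 0 < delta /\ forall n : nat, (1 <= n)%nat -> delta <= omega n) ->
     Tbounded omega ->
     forall lambda : C, ~ adj_eigenvalue omega lambda)
  /\ (forall lambda : C, ~ adj_eigenvalue omega0 lambda).
Proof.
  pose proof (Rinv_0_lt_compat _ PI_RGT_0) as Hinv.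
  split.
  - intros omega Hpos Hlow _; exact (no_adj_eigenvalue omega Hpos Hlow).
  - apply no_adj_eigenvalue.
    + intros n _; exact (Rlt_le_trans _ _ _ Hinv (omega0_ge n)).
    + exists (/ PI); split; [exact Hinv|intros n _; apply omega0_ge].
Qed.
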